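(* Let $\mathbf{X}\sim\mathcal{MSP}(\boldsymbol{\mu},\mathbf{K})$ be a $p$-variate $L^2$-continuous process on a compact interval $\mathcal{T}=\mathcal{T}_1\cup\dots\cup\mathcal{T}_d$ (pairwise disjoint subintervals), let $(\pi_i,\boldsymbol{\psi}_i)$, $i=1,\dots,M$, be the $M$ largest eigenpairs of its covariance operator with $\pi_M>0$, and write $\psi_{i,k}=\boldsymbol{\psi}_i'\mathbf{e}_k$ for the $k$th component of $\boldsymbol{\psi}_i$. For a set $Q\subseteq\{1,\dots,p\}\times\{1,\dots,d\}$ of (coordinate, interval) cells define $\hat{\mathbf{X}}^{Q}$ by $\hat X^{Q}_j(t)=X_j(t)$ if $t\in\mathcal{T}_b$ with $(j,b)\in Q$, and $\hat X^Q_j(t)=\mu_j(t)$ otherwise. Let $\Theta_{k,\mathcal{T}_a}(\mathbf{X},\boldsymbol{\mu};\mathbf{K},M)$ be the Shapley value of the cell $(k,a)$ in the cooperative game on the $pd$ players $\{1,\dots,p\}\times\{1,\dots,d\}$ with value function $v(Q)=\mathrm{fMMD}^2(\hat{\mathbf{X}}^Q,\boldsymbol{\mu};\mathbf{K},M)$, i.e. $$\Theta_{k,\mathcal{T}_a}=\sum_{Q\subseteq(\{1,..,p\}\times\{1,..,d\})\setminus\{(k,a)\}}\frac{|Q|!(pd-|Q|-1)!}{(pd)!}\big[v(Q\cup\{(k,a)\})-v(Q)\big].$$ Then $$\Theta_{k,\mathcal{T}_a}(\mathbf{X},\boldsymbol{\mu};\mathbf{K},M)=\sum_{i=1}^M\frac{1}{\pi_i}\langle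 X_k-\mu_k,\psi_{i,k}\rangle_{\mathcal{T}_a}\langle\mathbf{X}-\boldsymbol{\mu},\boldsymbol{\psi}_i\rangle.$$
   Context: $\mathcal{H}=L^2(\mathcal{T})^p$ with $\langle\mathbf{x},\mathbf{y}\rangle=\sum_j\int_{\mathcal{T}}x_jy_j$; for scalar functions $\langle f,g\rangle_{\mathcal{T}_a}=\int_{\mathcal{T}_a}fg$. $\mathbf{X}\sim\mathcal{MSP}(\boldsymbol{\mu},\mathbf{K})$ means $\mathbf{X}$ has mean $\boldsymbol{\mu}(t)=E\mathbf{X}(t)$ and covariance kernel $\mathbf{K}(s,t)=[\mathrm{Cov}(X_i(s),X_j(t))]$; the covariance operator is $\mathcal{C}\mathbf{x}(s)=\int\mathbf{K}(s,t)\mathbf{x}(t)dt$ with orthonormal eigenfunctions $\boldsymbol{\psi}_i$ and nonincreasing eigenvalues $\pi_i$. $\mathrm{fMMD}^2(\mathbf{Y},\boldsymbol{\mu};\mathbf{K},M)=\sum_{i=1}^M\pi_i^{-1}\langle\mathbf{Y}-\boldsymbol{\mu},\boldsymbol{\psi}_i\rangle^2$. $\mathbf{e}_k$ is the $k$th canonical basis vector of $\mathbb{R}^p$. *)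

From HB Require Import structures.
From mathcomp Require Import all_boot all_order all_algebra.
From mathcomp Require Import all_classical all_reals all_analysis.
Set Implicit Arguments. Unset Strict Implicit. Unset Printing Implicit Defensive.
Import Order.TTheory GRing.Theory Num.Theory.
Import numFieldNormedType.Exports.
Local Open Scope classical_set_scope.
Local Open Scope ring_scope.

Section Defs.
Variable R : realType.
Notation leb := (@lebesgue_measure R).

Definition L2on (A : set R) (f : R -> R) : Prop :=
  measurable_fun A f /\ (\int[leb]_(x in A) ((f x) ^+ 2)%:E < +oo)%E.

Definition ip_on (A : set R) (f g : R -> R) : R :=
  Rintegral leb A (fun t => f t * g t).

Definition inH (p : nat) (T : set R) (x : 'I_p -> R -> R) : Prop :=
  forall j, L2on T (x j).

Definition hip (p : nat) (T : set R) (x y : 'I_p -> R -> R) : R :=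
  \sum_(j < p) ip_on T (x j) (y j).

Definition covop (p : nat) (T : set R) (K : 'I_p -> 'I_p -> R -> R -> R)
  (x : 'I_p -> R -> R) : 'I_p -> R -> R :=
  fun k s => \sum_(j < p) Rintegral leb T (fun t => K k j s t * x j t).

Definition is_eigenpair (p : nat) (T : set R) (K : 'I_p -> 'I_p -> R -> R -> R)
  (lam : R) (phi : 'I_p -> R -> R) : Prop :=
  inH T phi /\
  {ae leb, forall s, T s -> forall k, covop T K phi k s = lam * phi k s}.

Definition is_L2cont_MSP (d0 : measure_display) (Omega : measurableType d0)
  (P : probability Omega R) (p : nat) (T : set R)
  (X : Omega -> 'I_p -> R -> R) (mu : 'I_p -> R -> R)
  (K : 'I_p -> 'I_p -> R -> R -> R) : Prop :=
  (forall j t, T t -> measurable_fun setT (fun w => X w j t) /\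
      (\int[P]_w ((X w j t) ^+ 2)%:E < +oo)%E) /\
  (forall j t, T t -> 'E_P[(fun w => X w j t)%R]%E = (mu j t)%:E) /\
  (forall j l s t, T s -> T t ->
     'E_P[(fun w => (X w j s - mu j s) * (X w l t - mu l t))%R]%E = (K j l s t)%:E) /\
  (forall j t, T t ->
     (fun s => fine 'E_P[(fun w => (X w j s - X w j t) ^+ 2)%R]%E)
       @ within T (nbhs t) --> (0 : R)).

Definition fMMD2 (p : nat) (T : set R) (Y mu : 'I_p -> R -> R)
  (pi : nat -> R) (psi : nat -> 'I_p -> R -> R) (M : nat) : R :=
  \sum_(i < M) (pi i)^-1 * (hip T (fun j t => Y j t - mu j t) (psi i)) ^+ 2.

Definition Xhat (p d : nat) (Tsub : 'I_d -> set R) (Q : {set 'I_p * 'I_d})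
  (Y mu : 'I_p -> R -> R) : 'I_p -> R -> R :=
  fun j t => if `[< exists b : 'I_d, ((j, b) \in Q) /\ Tsub b t >] then Y j t
             else mu j t.

End Defs.

Definition shapley (R : fieldType) (Pl : finType) (v : {set Pl} -> R) (k : Pl) : R :=
  \sum_(Q : {set Pl} | k \notin Q)
     ((#|Q| `! * (#|Pl| - #|Q| - 1) `!)%:R / (#|Pl| `!)%:R) * (v (k |: Q) - v Q).

(* Write A_i(j, b) := <X_j - mu_j, psi_{i,j}>_{T_b}.  Since X^Q - mu vanishes off the cells
   of Q, <X^Q - mu, psi_i> = sum_{c in Q} A_i(c), so the game is
   v(Q) = sum_i pi_i^-1 (sum_{c in Q} A_i(c))^2, and the Shapley value is linear in the game.
   For a squared additive game (sum_{c in Q} a_c)^2 the marginal contribution of k to Q is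
   a_k^2 + 2 a_k sum_{c in Q} a_c.  The Shapley weights of the coalitions avoiding k sum to 1,
   and complementation Q |-> (players \ Q) \ {k} preserves them while exchanging the
   coalitions that contain a given c <> k with those that do not, so each such c carries
   weight 1/2.  Hence the Shapley value of k is a_k^2 + a_k sum_{c <> k} a_c = a_k sum_c a_c.
   The only analytic input is integrability: mu is continuous on the compact T because
   (mu(s) - mu(t))^2 <= E (X(s) - X(t))^2, hence square integrable. *)

From HB Require Import structures.
From mathcomp Require Import all_boot all_order all_algebra.
From mathcomp Require Import all_classical all_reals all_analysis.
From mathcomp Require Import ring lra zify.
Set Implicit Arguments. Unset Strict Implicit. Unset Printing Implicit Defensive.
Import Order.TTheory GRing.Theory Num.Theory.
Import numFieldNormedType.Exports measurable_realfun.
Local Open Scope classical_set_scope.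
Local Open Scope ring_scope.

Section ShapleyCombinatorics.
Variables (R : numFieldType) (Pl : finType).

Lemma shapley_linear (I : finType) (w : I -> R) (v : I -> {set Pl} -> R) (k : Pl) :
  shapley (fun Q => \sum_i w i * v i Q) k = \sum_i w i * shapley (v i) k.
Proof.
rewrite /shapley; under eq_bigr => Q _ do rewrite -sumrB mulr_sumr.
rewrite exchange_big /=; apply: eq_bigr => i _; rewrite mulr_sumr.
by apply: eq_bigr => Q _; rewrite -mulrBr mulrCA.
Qed.

Definition shapley_weight (n q : nat) : R := (q`! * (n - q - 1)`!)%:R / (n`!)%:R.

Lemma sum_subsets_by_card (A : {set Pl}) (F : nat -> R) :
  \sum_(Q : {set Pl} | Q \subset A) F #|Q| = \sum_(q < #|A|.+1) 'C(#|A|, q)%:R * F q.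
Proof.
have cardQ (Q : {set Pl}) : Q \subset A -> (#|Q| < #|A|.+1)%N.
  by move=> QA; rewrite ltnS; exact: subset_leq_card.
rewrite (partition_big (fun Q : {set Pl} => inord #|Q| : 'I_#|A|.+1) xpredT) //=.
apply: eq_bigr => q _.
rewrite -(cards_draws A q) mulr_natl -sumr_const.
apply: eq_big => Q; last by case/andP=> QA /eqP <-; rewrite inordK ?cardQ.
rewrite inE; case QA: (Q \subset A) => //=.
by rewrite -(inj_eq val_inj) /= inordK ?cardQ.
Qed.

Lemma sum_shapley_weight (k : Pl) :
  \sum_(Q : {set Pl} | k \notin Q) shapley_weight #|Pl| #|Q| = 1.
Proof.
have [m Pl_m] : exists m, #|Pl| = m.+1.
  by exists #|Pl|.-1; rewrite prednK //; apply/card_gt0P; exists k.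
have A_m : #|~: [set k]| = m by rewrite cardsC1 Pl_m.
rewrite (eq_bigl (fun Q : {set Pl} => Q \subset ~: [set k])); last first.
  by move=> Q; rewrite finset.subsetC finset.sub1set inE.
rewrite sum_subsets_by_card A_m Pl_m.
rewrite (eq_bigr (fun _ => (m.+1%:R)^-1)).
  by rewrite sumr_const card_ord -(mulr_natr m.+1%:R^-1) mulVf // pnatr_eq0.
move=> [q /= qm] _; rewrite /shapley_weight subn1 subSn //=.
have fact_ne0 : (m`!)%:R != 0 :> R by rewrite pnatr_eq0 -lt0n fact_gt0.
by rewrite mulrA -natrM bin_fact // factS natrM invfM mulrA mulrAC mulfV ?mul1r.
Qed.

Lemma sum_shapley_weight_mem (k c : Pl) : c != k ->
  \sum_(Q : {set Pl} | (k \notin Q) && (c \in Q)) shapley_weight #|Pl| #|Q| = 2^-1.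
Proof.
move=> ck.
pose flip (Q : {set Pl}) := [set x | (x \in Q) (+) (x != k)]%SET.
have flipK : involutive flip by move=> Q; apply/setP => x; rewrite !inE addbK.
have weight_flip (Q : {set Pl}) : k \notin Q ->
    shapley_weight #|Pl| #|flip Q| = shapley_weight #|Pl| #|Q|.
  move=> kQ; have -> : flip Q = ~: (k |: Q).
    apply/setP => x; rewrite !inE; case: eqVneq => [->|_]; by rewrite ?(negbTE kQ) ?addbT.
  have := cardsC (k |: Q); rewrite cardsU1 kQ add1n => card_Q.
  rewrite /shapley_weight; congr (_%:R / _); rewrite [LHS]mulrC.
  by congr (_ * _); congr (_`!); lia.
have flip_mem (Q : {set Pl}) :
    (k \notin flip Q) && (c \in flip Q) = (k \notin Q) && (c \notin Q).
  by rewrite !inE eqxx ck addbF addbT.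
have in_eq_out :
    \sum_(Q : {set Pl} | (k \notin Q) && (c \in Q)) shapley_weight #|Pl| #|Q|
    = \sum_(Q : {set Pl} | (k \notin Q) && (c \notin Q)) shapley_weight #|Pl| #|Q|.
  rewrite (reindex_inj (inv_inj flipK)) /=.
  apply: eq_big => Q; first exact: flip_mem.
  by rewrite flip_mem => /andP[kQ _]; rewrite weight_flip.
have := sum_shapley_weight k.
rewrite (bigID (fun Q : {set Pl} => c \in Q)) /= -in_eq_out => total.
have two_ne0 : (2 : R) != 0 by rewrite pnatr_eq0.
by apply: (mulIf two_ne0); rewrite mulVf // mulr_natr mulr2n.
Qed.

Lemma shapley_sqr_additive (a : Pl -> R) (k : Pl) :
  shapley (fun Q => (\sum_(c in Q) a c) ^+ 2) k = a k * \sum_c a c.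
Proof.
have marginal (Q : {set Pl}) : k \notin Q ->
    (\sum_(c in k |: Q) a c) ^+ 2 - (\sum_(c in Q) a c) ^+ 2
    = a k * a k + 2 * a k * \sum_(c in Q) a c.
  by move=> kQ; rewrite big_setU1 //=; ring.
have mem_sum : \sum_(Q : {set Pl} | k \notin Q)
    shapley_weight #|Pl| #|Q| * \sum_(c in Q) a c = (\sum_(c | c != k) a c) / 2.
  under eq_bigr => Q _ do rewrite big_distrr /= big_mkcond /=.
  rewrite exchange_big /= (bigD1 k) //= big1 ?add0r; last first.
    by move=> Q kQ; rewrite (negbTE kQ).
  rewrite big_distrl /=; apply: eq_bigr => c ck.
  rewrite -(sum_shapley_weight_mem ck) big_distrr /= big_mkcondr /=.
  by apply: eq_bigr => Q _; case: (c \in Q); rewrite ?mulr0 // mulrC.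
rewrite /shapley (eq_bigr _ (fun Q kQ => congr1 _ (marginal Q kQ))).
under eq_bigr => Q _ do rewrite mulrDr.
rewrite big_split /= -big_distrl /= sum_shapley_weight mul1r.
under eq_bigr => Q _ do rewrite mulrCA.
rewrite -big_distrr /= mem_sum.
by rewrite [in RHS](bigD1 k) //=; field.
Qed.
End ShapleyCombinatorics.

Section SecondMoments.
Variables (R : realType) (d : measure_display) (Omega : measurableType d).

Lemma integral_sqr_lty_Lfun2 (mu : {measure set Omega -> \bar R}) (f : Omega -> R) :
  measurable_fun setT f -> (\int[mu]_w (f w ^+ 2)%:E < +oo)%E -> f \in Lfun mu 2%:E.
Proof.
move=> mf f2; rewrite inE; apply/andP; split; first by rewrite inE.
rewrite inE /= /finite_norm unlock /Lnorm; apply: poweR_lty.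
rewrite (eq_integral (fun x => (f x ^+ 2)%:E)) // => x _.
by rewrite /= powR_mulrn // real_normK ?num_real.
Qed.

Variable P : probability Omega R.

Lemma sqr_expectation_le (Z : Omega -> R) : Z \in Lfun P 2%:E ->
  fine 'E_P[Z]%E ^+ 2 <= fine 'E_P[Z ^+ 2]%E.
Proof.
move=> Z2.
have Pfin : P setT \is a fin_num := fin_num_measure P _ measurableT.
have EZ_fin : 'E_P[Z]%E \is a fin_num.
  by apply: expectation_fin_num; exact: Lfun_subset12.
have EZ2_fin : 'E_P[Z ^+ 2]%E \is a fin_num.
  by apply: expectation_fin_num; rewrite expr2; exact: Lfun2_mul_Lfun1.
have := variance_ge0 P Z.
by rewrite (varianceE Z2) -(fineK EZ_fin) -(fineK EZ2_fin) -EFin_expe -EFinB lee_fin subr_ge0.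
Qed.

Lemma sqr_sub_expectation_le (Xs Xt : Omega -> R) :
  Xs \in Lfun P 2%:E -> Xt \in Lfun P 2%:E ->
  (fine 'E_P[Xs]%E - fine 'E_P[Xt]%E) ^+ 2
  <= fine 'E_P[(fun w => (Xs w - Xt w) ^+ 2)%R]%E.
Proof.
move=> Xs2 Xt2.
have Pfin : P setT \is a fin_num := fin_num_measure P _ measurableT.
have Xst2 : Xs - Xt \in Lfun P 2%:E.
  by apply: (@Lfun_addr_closed _ _ _ P 2%:E (lee1n 2)).2 => //; exact: Lfun_oppr_closed.
have Xs1 := Lfun_subset12 Pfin Xs2; have Xt1 := Lfun_subset12 Pfin Xt2.
have -> : fine 'E_P[Xs]%E - fine 'E_P[Xt]%E = fine 'E_P[Xs - Xt]%E.
  by rewrite expectationB // fineB // expectation_fin_num.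
have -> : (fun w => (Xs w - Xt w) ^+ 2) = (Xs - Xt) ^+ 2 by apply/funext => w.
exact: sqr_expectation_le.
Qed.

Lemma L2cont_MSP_mean_continuous (p : nat) (T : set R) (X : Omega -> 'I_p -> R -> R)
    (mu : 'I_p -> R -> R) (K : 'I_p -> 'I_p -> R -> R -> R) (j : 'I_p) :
  is_L2cont_MSP P T X mu K -> {within T, continuous (mu j)}.
Proof.
move=> [X_L2 [X_mean [_ X_mscont]]].
have muE t : T t -> mu j t = fine 'E_P[fun w => X w j t]%E by move=> Tt; rewrite X_mean.
have X_Lfun t : T t -> (fun w => X w j t) \in Lfun P 2%:E.
  by move=> Tt; have [mX X2] := X_L2 j t Tt; exact: integral_sqr_lty_Lfun2.
rewrite continuous_subspace_in => t /set_mem Tt.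
suff : mu j @ within T (nbhs t) --> mu j t by rewrite (nbhs_subspace_in Tt).
apply/cvgrPdist_lt => e e0.
have /cvgrPdist_lt/(_ (e ^+ 2) (exprn_gt0 2 e0)) := X_mscont j t Tt.
move=> mscont; near=> s.
have Ts : T s by near: s; exact: withinT.
have : `|0 - fine 'E_P[(fun w => (X w j s - X w j t) ^+ 2)%R]%E| < e ^+ 2 by near: s.
have := sqr_sub_expectation_le (X_Lfun s Ts) (X_Lfun t Tt).
rewrite -muE // -muE // sub0r normrN => mean_le mscont_s.
have := le_lt_trans mean_le (le_lt_trans (ler_norm _) mscont_s).
by rewrite ltr_norml => sqr_lt; apply/andP; split; nra.
Unshelve. all: by end_near.
Qed.

End SecondMoments.

Section SquareIntegrable.
Variable R : realType.
Notation leb := (@lebesgue_measure R).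

Lemma L2on_integrable_sqr (A : set R) (f : R -> R) :
  measurable (A : set (measurableTypeR R)) -> L2on A f ->
  leb.-integrable A (EFin \o (fun t => f t ^+ 2)).
Proof.
move=> mA [mf f2]; apply/integrableP; split.
  by apply/measurable_EFinP; exact: measurable_funX.
by under eq_integral => t _ do rewrite /= ger0_norm ?sqr_ge0 //.
Qed.

Lemma L2on_integrable_mul (A : set R) (f g : R -> R) :
  measurable (A : set (measurableTypeR R)) -> L2on A f -> L2on A g ->
  leb.-integrable A (EFin \o (fun t => f t * g t)).
Proof.
move=> mA f2 g2; have [mf _] := f2; have [mg _] := g2.
have sqr_sum := integrableD mA (L2on_integrable_sqr mA f2) (L2on_integrable_sqr mA g2).
apply: (le_integrable mA _ _ sqr_sum).
  by apply/measurable_EFinP; exact: measurable_funM.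
move=> t _; rewrite /= lee_fin [leRHS]ger0_norm ?addr_ge0 ?sqr_ge0 // normrM.
rewrite -(real_normK (num_real (f t))) -(real_normK (num_real (g t))).
have := sqr_ge0 (`|f t| - `|g t|); have := normr_ge0 (f t); have := normr_ge0 (g t).
nra.
Qed.

Lemma continuous_L2on_itv (t0 t1 : R) (h : R -> R) : t0 <= t1 ->
  {within `[t0, t1], continuous h} -> L2on [set` `[t0, t1]] h.
Proof.
move=> t01 hc.
have mh : measurable_fun [set` `[t0, t1]] h.
  exact: subspace_continuous_measurable_fun (measurable_itv _) hc.
split => //.
have [c1 _ h_le] := EVT_max t01 hc; have [c2 _ h_ge] := EVT_min t01 hc.
pose C := h c1 ^+ 2 + h c2 ^+ 2.
apply: (@le_lt_trans _ _ (\int[leb]_(x in [set` `[t0, t1]]) (cst C%:E) x)%E).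
  apply: ge0_le_integral => //.
  - by move=> x _; rewrite lee_fin sqr_ge0.
  - by apply/measurable_EFinP; exact: measurable_funX.
  - move=> x xT; rewrite lee_fin /C.
    have := h_le x xT; have := h_ge x xT.
    have [hx0|hx0] := leP 0 (h x); nra.
have itv_fin : (leb [set` `[t0, t1]] < +oo)%E.
  by rewrite lebesgue_measure_itv /=; case: ifP => _; rewrite ?ltry.
by rewrite integral_cst // lte_mul_pinfty // lee_fin addr_ge0 ?sqr_ge0.
Qed.

End SquareIntegrable.

Lemma Rintegral_patch_bigsetU (R : realType) (d : measure_display) (T : measurableType d)
    (mu : {measure set T -> \bar R}) (I : finType) (D : set T) (S : I -> set T)
    (P : pred I) (f : T -> R) :
  measurable D -> (forall b, measurable (S b)) -> (forall b, S b `<=` D) ->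
  trivIset setT S -> mu.-integrable D (EFin \o f) ->
  \int[mu]_(x in D) (f \_ (\big[setU/set0]_(b | P b) S b)) x
  = \sum_(b | P b) \int[mu]_(x in S b) f x.
Proof.
move=> mD mS SD trivS intf.
rewrite -big_filter; set s := [seq b <- index_enum I | P b].
have sD : \big[setU/set0]_(b <- s) S b `<=` D.
  by rewrite -bigcup_seq => x [b _ /SD].
rewrite -Rintegral_mkcondr setIidr // /Rintegral integral_bigsetU_EFin //.
- rewrite (eq_bigr (fun b => (\int[mu]_(x in S b) f x)%:E)) ?sumEFin /= ?big_filter //.
  move=> b _; rewrite fineK //.
  by apply: integrable_fin_num => //; exact: integrableS intf.
- by rewrite filter_uniq // index_enum_uniq.
- exact: sub_trivIset trivS.
- by apply: measurable_funS mD sD _; case/integrableP: intf.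
Qed.

Section MaskedInnerProduct.
Variables (R : realType) (p d : nat) (T : set R) (Tsub : 'I_d -> set R).
Hypotheses (mT : measurable (T : set (measurableTypeR R)))
  (mTsub : forall b, measurable (Tsub b : set (measurableTypeR R)))
  (Tsub_sub : forall b, Tsub b `<=` T) (Tsub_triv : trivIset setT Tsub).
Variables (Y mu phi : 'I_p -> R -> R).
Hypotheses (Y_L2 : forall j, L2on T (Y j)) (mu_L2 : forall j, L2on T (mu j))
  (phi_L2 : forall j, L2on T (phi j)).

Lemma hip_Xhat_sub (Q : {set 'I_p * 'I_d}) :
  hip T (fun j t => Xhat Tsub Q Y mu j t - mu j t) phi
  = \sum_(c in Q) ip_on (Tsub c.2) (fun t => Y c.1 t - mu c.1 t) (phi c.1).
Proof.
rewrite /hip (eq_bigr (fun j => \sum_(b | (j, b) \in Q)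
    ip_on (Tsub b) (fun t => Y j t - mu j t) (phi j))); last first.
  move=> j _; have Yphi := L2on_integrable_mul mT (Y_L2 j) (phi_L2 j).
  have muphi := L2on_integrable_mul mT (mu_L2 j) (phi_L2 j).
  have intj : (@lebesgue_measure R).-integrable T
      (EFin \o (fun t => (Y j t - mu j t) * phi j t)).
    by apply: eq_integrable (integrableB mT Yphi muphi) => // t _ /=; rewrite mulrBl.
  rewrite /ip_on -(Rintegral_patch_bigsetU _ mT mTsub Tsub_sub Tsub_triv intj).
  apply: eq_Rintegral => t _.
  have cells_mem : (\big[setU/set0]_(b | (j, b) \in Q) Tsub b) t <->
      exists b, (j, b) \in Q /\ Tsub b t.
    rewrite -bigcup_seq_cond; split => [[b /andP[_ jbQ] Tbt]|[b [jbQ Tbt]]].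
      by exists b.
    by exists b => //; rewrite /= mem_index_enum.
  rewrite /Xhat /patch; case: asboolP => [/cells_mem/mem_set -> //|nQ].
  by case: ifP => [/set_mem/cells_mem //|_]; rewrite subrr mul0r.
by rewrite pair_big_dep; apply: eq_bigl => -[j b].
Qed.

Lemma hip_sub_cells : T `<=` \bigcup_b Tsub b ->
  hip T (fun j t => Y j t - mu j t) phi
  = \sum_c ip_on (Tsub c.2) (fun t => Y c.1 t - mu c.1 t) (phi c.1).
Proof.
move=> T_cover.
transitivity (hip T (fun j t => Xhat Tsub [set: 'I_p * 'I_d]%SET Y mu j t - mu j t) phi).
  apply: eq_bigr => j _; apply: eq_Rintegral => t /set_mem Tt.
  rewrite /Xhat; case: asboolP => // -[].
  by have [b _ Tbt] := T_cover t Tt; exists b; rewrite finset.in_setT.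
by rewrite hip_Xhat_sub; apply: eq_bigl => c; rewrite finset.in_setT.
Qed.

End MaskedInnerProduct.

Theorem proposition2 (R : realType) (d0 : measure_display)
  (Omega : measurableType d0) (P : probability Omega R)
  (p d : nat) (t0 t1 : R) (Tsub : 'I_d -> set R)
  (X : Omega -> 'I_p -> R -> R) (mu : 'I_p -> R -> R)
  (K : 'I_p -> 'I_p -> R -> R -> R)
  (M : nat) (pi : nat -> R) (psi : nat -> 'I_p -> R -> R) :
  t0 <= t1 ->
  (forall b, exists I : interval R, Tsub b = [set` I]) ->
  (forall b b', b != b' -> Tsub b `&` Tsub b' = set0) ->
  \bigcup_(b in [set: 'I_d]) Tsub b = [set` `[t0, t1]] ->
  is_L2cont_MSP P [set` `[t0, t1]] X mu K ->
  (* (pi_i, psi_i), i < M, are the M largest eigenpairs of the covariance operator *)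
  (forall i, (i < M)%N -> is_eigenpair [set` `[t0, t1]] K (pi i) (psi i)) ->
  (forall i i', (i < M)%N -> (i' < M)%N ->
     hip [set` `[t0, t1]] (psi i) (psi i') = (i == i')%:R) ->
  (forall i i', (i <= i')%N -> (i' < M)%N -> pi i' <= pi i) ->
  (forall (lam : R) (phi : 'I_p -> R -> R),
     is_eigenpair [set` `[t0, t1]] K lam phi -> hip [set` `[t0, t1]] phi phi != 0 ->
     (forall i, (i < M)%N -> hip [set` `[t0, t1]] phi (psi i) = 0) ->
     lam <= pi M.-1) ->
  (0 < M)%N -> 0 < pi M.-1 ->
  forall (w : Omega), (forall j, L2on [set` `[t0, t1]] (X w j)) ->
  forall (k : 'I_p) (a : 'I_d),
    shapley (fun Q : {set 'I_p * 'I_d} =>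
               fMMD2 [set` `[t0, t1]] (Xhat Tsub Q (X w) mu) mu pi psi M) (k, a)
    = \sum_(i < M) (pi i)^-1
        * ip_on (Tsub a) (fun t => X w k t - mu k t) (psi i k)
        * hip [set` `[t0, t1]] (fun j t => X w j t - mu j t) (psi i).
Proof.
move=> t01 Tsub_itv Tsub_disj Tsub_cover MSP psi_eigen _ _ _ _ _ w X_L2 k a.
set T := [set` `[t0, t1]].
have mT : measurable (T : set (measurableTypeR R)) := measurable_itv _.
have mTsub b : measurable (Tsub b : set (measurableTypeR R)).
  by have [I ->] := Tsub_itv b; exact: measurable_itv.
have Tsub_sub b : Tsub b `<=` T by rewrite /T -Tsub_cover => t Tbt; exists b.
have T_cover : T `<=` \bigcup_b Tsub b by rewrite /T -Tsub_cover => t [b _ Tbt]; exists b.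
have Tsub_triv : trivIset setT Tsub.
  move=> b b' _ _ [t Tbt]; apply/eqP; apply: contraT => /Tsub_disj disj.
  by move: Tbt; rewrite disj.
have mu_L2 j : L2on T (mu j).
  exact: continuous_L2on_itv t01 (L2cont_MSP_mean_continuous (j := j) MSP).
have psi_L2 (i : 'I_M) : forall j, L2on T (psi i j) := (psi_eigen i (ltn_ord i)).1.
pose A (i : 'I_M) (c : 'I_p * 'I_d) :=
  ip_on (Tsub c.2) (fun t => X w c.1 t - mu c.1 t) (psi i c.1).
have hip_Xhat i := hip_Xhat_sub mT mTsub Tsub_sub Tsub_triv X_L2 mu_L2 (psi_L2 i).
have hip_X i := hip_sub_cells mT mTsub Tsub_sub Tsub_triv X_L2 mu_L2 (psi_L2 i) T_cover.
have -> : (fun Q => fMMD2 T (Xhat Tsub Q (X w) mu) mu pi psi M)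
    = (fun Q => \sum_(i < M) (pi i)^-1 * (\sum_(c in Q) A i c) ^+ 2).
  by apply/funext => Q; apply: eq_bigr => i _; rewrite hip_Xhat.
rewrite shapley_linear; apply: eq_bigr => i _.
by rewrite shapley_sqr_additive hip_X mulrA.
Qed.
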